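(* Let $A$ be a real $2\times 2$ matrix and $B$ a real $1\times 2$ matrix, and let $\mathrm{NT}=\{\vec{x}\in\mathbb{R}^2 : BA^k\vec{x}>0 \text{ for all integers } k\ge 0\}$. If the topological boundary $\partial\mathrm{NT}$ is composed of two rays $l_1=\{k\vec{v}_1:k\ge 0\}$ and $l_2=\{k\vec{v}_2:k\ge0\}$ starting from the origin (with $\vec{v}_1,\vec{v}_2$ nonzero and not positive multiples of each other), then $l_1$ or $l_2$ is contained in the line $\{\vec{x}: B\vec{x}=0\}$.
   Context: $\mathrm{NT}$ is the non-termination set of the loop ''while $(B\vec{x}>0)$ $\{\vec{x}:=A\vec{x}\}$''. *)

From Stdlib Require Import Reals.
Open Scope R_scope.

Definition vec2 := (R * R)%type.

Record mat22 := Mat22 { a11 : R; a12 : R; a21 : R; a22 : R }.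
Record mat12 := Mat12 { b1 : R; b2 : R }.

Definition mulA (A : mat22) (x : vec2) : vec2 :=
  (a11 A * fst x + a12 A * snd x, a21 A * fst x + a22 A * snd x).

Definition mulB (B : mat12) (x : vec2) : R := b1 B * fst x + b2 B * snd x.

Definition powA (A : mat22) (k : nat) (x : vec2) : vec2 := Nat.iter k (mulA A) x.

Definition scal (t : R) (v : vec2) : vec2 := (t * fst v, t * snd v).

Definition NT (A : mat22) (B : mat12) (x : vec2) : Prop :=
  forall k : nat, mulB B (powA A k x) > 0.

Definition dist2 (x y : vec2) : R := (fst x - fst y)^2 + (snd x - snd y)^2.

Definition boundary (S : vec2 -> Prop) (x : vec2) : Prop :=
  forall eps : R, eps > 0 ->
    (exists y, S y /\ dist2 x y < eps^2) /\
    (exists z, ~ S z /\ dist2 x z < eps^2).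

Definition ray (v : vec2) (x : vec2) : Prop := exists t : R, 0 <= t /\ x = scal t v.

From Stdlib Require Import Reals Lra Lia Psatz.
Open Scope R_scope.

(* Write al k = B A^k v1 and be k = B A^k v2 ("guard values").
   Suppose neither B v1 nor B v2 vanishes.  Both points lie on the boundary of
   NT, an intersection of open half-planes {B A^k x > 0}, hence al, be >= 0 and
   al 0, be 0 > 0; v1, v2 are then linearly independent, and al k + be k > 0
   (otherwise the form B A^k would vanish identically, although NT is not
   empty).  By Cayley-Hamilton both sequences satisfy
   x (k+2) = tr A * x (k+1) - det A * x k.  The central lemma on such
   recurrences says that the comparison sequence al 0 * be k - be 0 * al k has
   a constant sign.  If, say, be k / be 0 >= al k / al 0 for all k, then every
   z = a v1 + b v2 with b be 0 > |a| al 0 -- an open cone around v2 -- has all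
   guard values positive, so v2 is an interior point of NT, contradicting
   v2 in the boundary. *)

Definition rowmul (C : mat12) (A : mat22) : mat12 :=
  Mat12 (b1 C * a11 A + b2 C * a21 A) (b1 C * a12 A + b2 C * a22 A).

Lemma mulB_rowmul (C : mat12) (A : mat22) (x : vec2) :
  mulB (rowmul C A) x = mulB C (mulA A x).
Proof. unfold mulB, mulA, rowmul; simpl; ring. Qed.

Definition rowpow (A : mat22) (B : mat12) (k : nat) : mat12 :=
  Nat.iter k (fun C => rowmul C A) B.

Definition guard_seq (A : mat22) (B : mat12) (x : vec2) (k : nat) : R :=
  mulB B (powA A k x).

Lemma NT_guard (A : mat22) (B : mat12) (x : vec2) :
  NT A B x <-> forall k, guard_seq A B x k > 0.
Proof. reflexivity. Qed.

Lemma guard_seq_0 (A : mat22) (B : mat12) (x : vec2) : guard_seq A B x 0 = mulB B x.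
Proof. reflexivity. Qed.

(* Each guard value is a linear form in x, so NT is an intersection of
   open half-planes. *)
Lemma guard_seq_rowpow (A : mat22) (B : mat12) (x : vec2) (k : nat) :
  guard_seq A B x k = mulB (rowpow A B k) x.
Proof.
  revert x; induction k as [|k IH]; intro x; [reflexivity|].
  unfold rowpow; rewrite Nat.iter_succ, mulB_rowmul.
  fold (rowpow A B k); rewrite <- IH.
  unfold guard_seq, powA; rewrite Nat.iter_swap; reflexivity.
Qed.

Definition trA (A : mat22) : R := a11 A + a22 A.
Definition detA (A : mat22) : R := a11 A * a22 A - a12 A * a21 A.

(* Cayley-Hamilton: A^2 = tr A * A - det A * I, so every guard sequence
   satisfies a second-order linear recurrence. *)
Lemma guard_seq_cayley_hamilton (A : mat22) (B : mat12) (x : vec2) (k : nat) :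
  guard_seq A B x (S (S k)) =
  trA A * guard_seq A B x (S k) - detA A * guard_seq A B x k.
Proof. unfold guard_seq, powA, trA, detA; simpl; unfold mulA, mulB; simpl; ring. Qed.

Definition det2 (v w : vec2) : R := fst v * snd w - snd v * fst w.

Lemma det2_swap (v w : vec2) : det2 w v = - det2 v w.
Proof. unfold det2; ring. Qed.

(* The coordinate forms of a basis (v, w): z = coordL z * v + coordR z * w
   (Cramer's rule). *)
Definition coordL (v w : vec2) : mat12 :=
  Mat12 (snd w / det2 v w) (- fst w / det2 v w).
Definition coordR (v w : vec2) : mat12 :=
  Mat12 (- snd v / det2 v w) (fst v / det2 v w).

Lemma form_coords (C : mat12) (v w z : vec2) : det2 v w <> 0 ->
  mulB C z = mulB (coordL v w) z * mulB C v + mulB (coordR v w) z * mulB C w.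
Proof. intro D; unfold mulB, coordL, coordR, det2 in *; simpl; field; exact D. Qed.

Lemma coordL_right (v w : vec2) : mulB (coordL v w) w = 0.
Proof. unfold mulB, coordL; simpl; unfold Rdiv; ring. Qed.

Lemma coordR_right (v w : vec2) : det2 v w <> 0 -> mulB (coordR v w) w = 1.
Proof. intro D; unfold mulB, coordR, det2 in *; simpl; field; exact D. Qed.

Lemma form_zero_on_basis (C : mat12) (v w z : vec2) : det2 v w <> 0 ->
  mulB C v = 0 -> mulB C w = 0 -> mulB C z = 0.
Proof. intros D Ev Ew; rewrite (form_coords C v w z D), Ev, Ew; ring. Qed.

Lemma collinear_multiple (C : mat12) (v w : vec2) : det2 v w = 0 ->
  mulB C v <> 0 -> w = scal (mulB C w / mulB C v) v.
Proof.
  intros D Cv; destruct C as [c1 c2], v as [v1 v2], w as [w1 w2].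
  unfold det2, scal, mulB in *; simpl in *.
  assert (E1 : c1 * (v1 * w2 - v2 * w1) = 0) by (rewrite D; ring).
  assert (E2 : c2 * (v1 * w2 - v2 * w1) = 0) by (rewrite D; ring).
  f_equal; field_simplify_eq; auto; lra.
Qed.

Definition form_comb (s : R) (C : mat12) (r : R) (E : mat12) : mat12 :=
  Mat12 (s * b1 C + r * b1 E) (s * b2 C + r * b2 E).

Lemma mulB_form_comb (s r : R) (C E : mat12) (x : vec2) :
  mulB (form_comb s C r E) x = s * mulB C x + r * mulB E x.
Proof. unfold mulB, form_comb; simpl; ring. Qed.

(* Cauchy-Schwarz: a linear form is Lipschitz for the Euclidean distance. *)
Lemma form_lipschitz (C : mat12) (v z : vec2) :
  (mulB C v - mulB C z) ^ 2 <= (b1 C ^ 2 + b2 C ^ 2) * dist2 v z.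
Proof.
  destruct C as [c1 c2]; unfold mulB, dist2; simpl.
  set (d1 := fst v - fst z); set (d2 := snd v - snd z).
  replace (c1 * fst v + c2 * snd v - (c1 * fst z + c2 * snd z)) with (c1 * d1 + c2 * d2)
    by (unfold d1, d2; ring).
  assert (Hsq : 0 <= (c1 * d2 - c2 * d1) ^ 2) by apply pow2_ge_0.
  replace ((c1 ^ 2 + c2 ^ 2) * (d1 ^ 2 + d2 ^ 2))
    with ((c1 * d1 + c2 * d2) ^ 2 + (c1 * d2 - c2 * d1) ^ 2) by ring.
  lra.
Qed.

Lemma form_pos_near (C : mat12) (v : vec2) : mulB C v > 0 ->
  exists eta, eta > 0 /\ forall z, dist2 v z < eta ^ 2 -> mulB C z > 0.
Proof.
  intro Hv; pose proof (form_lipschitz C v) as Hlip.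
  set (h := mulB C v) in *; set (N := b1 C ^ 2 + b2 C ^ 2) in *.
  assert (HN : 0 <= N) by (unfold N; nra).
  clearbody h N.
  exists (h / (N + 1)); split; [apply Rdiv_lt_0_compat; lra|].
  intros z Hz.
  assert (Heta : N * (h / (N + 1)) ^ 2 < h ^ 2).
  { replace (N * (h / (N + 1)) ^ 2) with (h ^ 2 * (N / ((N + 1) * (N + 1))))
      by (field; lra).
    assert (N / ((N + 1) * (N + 1)) < 1).
    { apply (Rmult_lt_reg_r ((N + 1) * (N + 1))); [nra|].
      field_simplify; nra. }
    assert (0 < h ^ 2) by (apply pow_lt; lra).
    nra. }
  specialize (Hlip z).
  assert (Hdist : N * dist2 v z <= N * (h / (N + 1)) ^ 2)
    by (apply Rmult_le_compat_l; lra).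
  nra.
Qed.

Lemma two_forms_pos_near (C E : mat12) (v : vec2) :
  mulB C v > 0 -> mulB E v > 0 ->
  exists eta, eta > 0 /\
    forall z, dist2 v z < eta ^ 2 -> mulB C z > 0 /\ mulB E z > 0.
Proof.
  intros HC HE.
  destruct (form_pos_near C v HC) as [e1 [He1 Z1]].
  destruct (form_pos_near E v HE) as [e2 [He2 Z2]].
  exists (Rmin e1 e2); split; [apply Rmin_glb_lt; lra|].
  pose proof (Rmin_l e1 e2); pose proof (Rmin_r e1 e2).
  assert (0 < Rmin e1 e2) by (apply Rmin_glb_lt; lra).
  intros z Hz; split; [apply Z1 | apply Z2]; nra.
Qed.

Lemma boundary_form_nonneg (S : vec2 -> Prop) (C : mat12) (v : vec2) :
  boundary S v -> (forall y, S y -> mulB C y > 0) -> 0 <= mulB C v.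
Proof.
  intros Hbd Hpos; destruct (Rle_or_lt 0 (mulB C v)) as [G|G]; [exact G|exfalso].
  destruct (form_pos_near (Mat12 (- b1 C) (- b2 C)) v) as [eta [Heta Hnear]].
  { unfold mulB in *; simpl; lra. }
  destruct (proj1 (Hbd eta Heta)) as [y [Sy Hy]].
  specialize (Hnear y Hy); specialize (Hpos y Sy); unfold mulB in *; simpl in *; lra.
Qed.

Lemma boundary_not_interior (S : vec2 -> Prop) (v : vec2) (eta : R) :
  boundary S v -> eta > 0 -> (forall z, dist2 v z < eta ^ 2 -> S z) -> False.
Proof.
  intros Hbd Heta Hint; destruct (proj2 (Hbd eta Heta)) as [z [Sz Hz]].
  exact (Sz (Hint z Hz)).
Qed.

Lemma geometric_eventually_below (q z c : R) : 0 <= q < 1 -> 0 < c ->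
  exists N, forall k, (N <= k)%nat -> q ^ k * z < c.
Proof.
  intros Hq Hc.
  assert (Hqa : Rabs q < 1) by (rewrite Rabs_pos_eq; lra).
  assert (Hz : 0 < c / (Rabs z + 1))
    by (apply Rdiv_lt_0_compat; [|pose proof (Rabs_pos z)]; lra).
  destruct (pow_lt_1_zero q Hqa _ Hz) as [N HN]; exists N; intros k Hk.
  specialize (HN k Hk); rewrite Rabs_pos_eq in HN by (apply pow_le; lra).
  pose proof (Rabs_pos z); pose proof (Rle_abs z).
  assert (Hqk : 0 <= q ^ k) by (apply pow_le; lra).
  assert (c / (Rabs z + 1) * Rabs z < c).
  { apply (Rmult_lt_reg_r (Rabs z + 1)); [lra|]; field_simplify; nra. }
  assert (q ^ k * z <= q ^ k * Rabs z) by (apply Rmult_le_compat_l; lra).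
  assert (q ^ k * Rabs z <= c / (Rabs z + 1) * Rabs z)
    by (apply Rmult_le_compat_r; lra).
  lra.
Qed.

(* A geometric sequence of ratio -M cannot stay below one of smaller ratio
   l > 0 unless it is zero: pick the parity making (-M)^k y = M^k |y|. *)
Lemma alternating_domination (l M y z : R) : 0 < l < M ->
  (forall k, (- M) ^ k * y <= l ^ k * z) -> y = 0.
Proof.
  intros Hl Hdom; destruct (Req_dec y 0) as [E|Hy]; [exact E|exfalso].
  set (q := l / M).
  assert (Hq : 0 <= q < 1).
  { unfold q; split; [apply Rlt_le, Rdiv_lt_0_compat; lra|].
    apply (Rmult_lt_reg_r M); [lra|]; field_simplify; lra. }
  destruct (geometric_eventually_below q z (Rabs y) Hq (Rabs_pos_lt y Hy)) as [N HN].
  assert (Hpar : exists k, (N <= k)%nat /\ (- M) ^ k * y = M ^ k * Rabs y).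
  { assert (Hneg : forall k, (- M) ^ k = (-1) ^ k * M ^ k)
      by (intro k; rewrite <- Rpow_mult_distr; f_equal; ring).
    destruct (Rle_or_lt 0 y) as [Hp|Hn].
    - exists (2 * N)%nat; split; [lia|].
      rewrite Hneg, pow_1_even, Rabs_pos_eq by lra; ring.
    - exists (S (2 * N)); split; [lia|].
      rewrite Hneg, pow_1_odd, Rabs_left by lra; ring. }
  destruct Hpar as [k [Hk Ek]].
  specialize (HN k Hk); specialize (Hdom k); rewrite Ek in Hdom.
  assert (HMk : 0 < M ^ k) by (apply pow_lt; lra).
  assert (Hlk : l ^ k = M ^ k * q ^ k)
    by (unfold q; rewrite <- Rpow_mult_distr; f_equal; field; lra).
  rewrite Hlk in Hdom; nra.
Qed.

Section LinearRecurrence.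

Variables t d : R.

Definition lin_rec (x : nat -> R) : Prop :=
  forall k, x (S (S k)) = t * x (S k) - d * x k.

Fixpoint useq (n : nat) : R :=
  match n with
  | O => 0
  | S O => 1
  | S ((S m) as k) => t * useq k - d * useq m
  end.

Lemma lin_rec_zero_start (x : nat -> R) : lin_rec x -> x 0%nat = 0 ->
  forall k, x k = x 1%nat * useq k.
Proof.
  intros Hx H0 k.
  enough (forall k, x k = x 1%nat * useq k /\ x (S k) = x 1%nat * useq (S k))
    by apply H.
  clear k; induction k as [|k [IH1 IH2]]; [simpl; split; lra|].
  split; [exact IH2|].
  rewrite Hx, IH1, IH2; simpl; ring.
Qed.

Lemma useq_nonneg : 0 <= t -> d <= 0 -> forall k, 0 <= useq k.
Proof.
  intros Ht Hd k.
  enough (forall k, 0 <= useq k /\ 0 <= useq (S k)) by apply H.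
  clear k; induction k as [|k [IH1 IH2]]; [simpl; lra|].
  split; [exact IH2|].
  change (0 <= t * useq (S k) - d * useq k); nra.
Qed.

Definition casoratian (x y : nat -> R) (k : nat) : R :=
  x k * y (S k) - y k * x (S k).

Lemma casoratian_geometric (x y : nat -> R) : lin_rec x -> lin_rec y ->
  forall k, casoratian x y k = d ^ k * casoratian x y 0.
Proof.
  intros Hx Hy k; induction k as [|k IH]; [simpl; ring|].
  replace (casoratian x y (S k)) with (d * casoratian x y k)
    by (unfold casoratian; rewrite Hx, Hy; ring).
  rewrite IH; simpl; ring.
Qed.

(* With characteristic roots l, m, removing the l-component leaves a
   geometric sequence of ratio m. *)
Lemma root_shift (l m : R) (x : nat -> R) : l + m = t -> l * m = d -> lin_rec x ->
  forall k, x (S k) - l * x k = m ^ k * (x 1%nat - l * x 0%nat).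
Proof.
  intros Ht Hd Hx k; induction k as [|k IH]; [simpl; ring|].
  replace (m ^ S k * (x 1%nat - l * x 0%nat))
    with (m * (m ^ k * (x 1%nat - l * x 0%nat))) by (simpl; ring).
  rewrite <- IH, Hx, <- Ht, <- Hd; ring.
Qed.

Lemma nonneg_solution_dominant_root (l m : R) (x : nat -> R) :
  l + m = t -> l * m = d -> 0 < l -> l < - m -> lin_rec x ->
  (forall k, 0 <= x k) -> x 1%nat = l * x 0%nat.
Proof.
  intros Ht Hd Hl Hlm Hx Hpos.
  enough (x 1%nat - l * x 0%nat = 0) by lra.
  apply (alternating_domination l (- m) _ (x 1%nat - m * x 0%nat)); [lra|].
  intro k; replace (- - m) with m by ring.
  rewrite <- (root_shift l m x Ht Hd Hx k).
  rewrite <- (root_shift m l x (eq_trans (Rplus_comm m l) Ht)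
                (eq_trans (Rmult_comm m l) Hd) Hx k).
  specialize (Hpos k); nra.
Qed.

End LinearRecurrence.

Definition const_sign (x : nat -> R) : Prop :=
  (forall k, 0 <= x k) \/ (forall k, x k <= 0).

Section Comparison.

Variables (t d : R) (al be : nat -> R).
Hypotheses (rec_al : lin_rec t d al) (rec_be : lin_rec t d be)
  (al_nonneg : forall k, 0 <= al k) (be_nonneg : forall k, 0 <= be k).

(* The comparison sequence; its sign says which of al / al 0 and be / be 0 is
   larger. *)
Let cmp (k : nat) : R := al 0%nat * be k - be 0%nat * al k.

(* cmp is a solution vanishing at 0 with cmp 1 = casoratian al be 0. *)
Lemma comparison_multiple_of_useq :
  forall k, cmp k = casoratian al be 0 * useq t d k.
Proof.
  apply (lin_rec_zero_start t d cmp); [|unfold cmp; ring].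
  intro k; unfold cmp; rewrite rec_al, rec_be; ring.
Qed.

(* For d >= 0 the Casoratian has a constant sign, and the identity
   cmp (k+1) (al k + be k) = cmp k (al (k+1) + be (k+1))
                             + casoratian k (al 0 + be 0)
   propagates it to cmp. *)
Lemma comparison_nonneg_of_casoratian :
  (forall k, 0 < al k + be k) -> 0 <= d -> 0 <= casoratian al be 0 ->
  forall k, 0 <= cmp k.
Proof.
  intros Hsum Hd Hc k; induction k as [|k IH]; [unfold cmp; lra|].
  assert (Hid : cmp (S k) * (al k + be k) =
                cmp k * (al (S k) + be (S k)) + casoratian al be k * (al 0%nat + be 0%nat))
    by (unfold cmp, casoratian; ring).
  rewrite (casoratian_geometric t d al be rec_al rec_be k) in Hid.
  assert (0 <= d ^ k) by (apply pow_le; exact Hd).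
  pose proof (Hsum k); pose proof (Hsum (S k)); pose proof (Hsum 0%nat).
  assert (0 <= cmp k * (al (S k) + be (S k))) by (apply Rmult_le_pos; lra).
  assert (0 <= d ^ k * casoratian al be 0 * (al 0%nat + be 0%nat))
    by (apply Rmult_le_pos; [apply Rmult_le_pos|]; lra).
  nra.
Qed.

(* For t, d < 0 the roots are real with the negative one dominant, so both
   nonnegative solutions are geometric of the same ratio. *)
Lemma casoratian_vanishes_of_negative_coeffs :
  t < 0 -> d < 0 -> casoratian al be 0 = 0.
Proof.
  intros Ht Hd.
  set (disc := t * t - 4 * d).
  assert (Hdisc : 0 <= disc) by (unfold disc; nra).
  pose proof (sqrt_sqrt disc Hdisc); pose proof (sqrt_pos disc).
  set (l := (t + sqrt disc) / 2); set (m := (t - sqrt disc) / 2).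
  assert (Hsum : l + m = t) by (unfold l, m; field).
  assert (Hprod : l * m = d) by (unfold l, m, disc in *; nra).
  assert (Hl : 0 < l) by (unfold l, disc in *; nra).
  assert (Hlm : l < - m) by (unfold l, m; lra).
  unfold casoratian.
  rewrite (nonneg_solution_dominant_root t d l m al Hsum Hprod Hl Hlm rec_al al_nonneg),
          (nonneg_solution_dominant_root t d l m be Hsum Hprod Hl Hlm rec_be be_nonneg).
  ring.
Qed.

End Comparison.

Theorem comparison_constant_sign (t d : R) (al be : nat -> R) :
  lin_rec t d al -> lin_rec t d be ->
  (forall k, 0 <= al k) -> (forall k, 0 <= be k) -> (forall k, 0 < al k + be k) ->
  const_sign (fun k => al 0%nat * be k - be 0%nat * al k).
Proof.
  intros Ral Rbe Hal Hbe Hsum.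
  destruct (Rle_or_lt 0 d) as [Hd|Hd].
  - destruct (Rle_or_lt 0 (casoratian al be 0)) as [Hc|Hc].
    + left; exact (comparison_nonneg_of_casoratian t d al be Ral Rbe Hsum Hd Hc).
    + right; intro k.
      assert (Hsum' : forall k, 0 < be k + al k) by (intro j; rewrite Rplus_comm; apply Hsum).
      assert (Hc' : 0 <= casoratian be al 0) by (unfold casoratian in *; lra).
      pose proof (comparison_nonneg_of_casoratian t d be al Rbe Ral Hsum' Hd Hc' k).
      lra.
  - pose proof (comparison_multiple_of_useq t d al be Ral Rbe) as Hmul; simpl in Hmul.
    destruct (Rle_or_lt 0 t) as [Ht|Ht].
    + pose proof (useq_nonneg t d Ht (Rlt_le _ _ Hd)) as Hu.
      destruct (Rle_or_lt 0 (casoratian al be 0)) as [Hc|Hc];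
        [left | right]; intro k; rewrite Hmul; specialize (Hu k); nra.
    + rewrite (casoratian_vanishes_of_negative_coeffs t d al be Ral Rbe Hal Hbe Ht Hd) in Hmul.
      left; intro k; rewrite Hmul; lra.
Qed.

Lemma boundary_guard_nonneg (A : mat22) (B : mat12) (x : vec2) :
  boundary (NT A B) x -> forall k, 0 <= guard_seq A B x k.
Proof.
  intros Hbd k; rewrite guard_seq_rowpow.
  apply (boundary_form_nonneg (NT A B)); [exact Hbd|].
  intros y Hy; rewrite <- guard_seq_rowpow; apply Hy.
Qed.

Lemma dominated_combination_pos (a b al0 be0 alk bek : R) :
  0 <= alk -> 0 <= bek -> 0 < alk + bek -> 0 < be0 ->
  be0 * alk <= al0 * bek -> b * be0 - a * al0 > 0 -> b * be0 + a * al0 > 0 ->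
  a * alk + b * bek > 0.
Proof.
  intros Ha Hb Hs Hbe0 Hdom Hm Hp.
  assert (Hbpos : 0 < b) by nra.
  assert (Hbek : 0 < bek).
  { destruct (Rle_lt_or_eq_dec 0 bek Hb) as [G|E]; [exact G|subst bek].
    assert (alk <= 0) by nra; lra. }
  destruct (Rle_or_lt 0 a) as [Ha0|Ha0]; [nra|].
  assert (be0 * (a * alk + b * bek) >= bek * (b * be0 + a * al0)) by nra.
  nra.
Qed.

Lemma dominant_point_interior (A : mat22) (B : mat12) (v w : vec2) :
  det2 v w <> 0 ->
  (forall k, 0 <= guard_seq A B v k) -> (forall k, 0 <= guard_seq A B w k) ->
  (forall k, 0 < guard_seq A B v k + guard_seq A B w k) -> 0 < mulB B w ->
  (forall k, mulB B w * guard_seq A B v k <= mulB B v * guard_seq A B w k) ->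
  exists eta, eta > 0 /\ forall z, dist2 w z < eta ^ 2 -> NT A B z.
Proof.
  intros D Hv Hw Hsum Hw0 Hdom.
  set (al0 := mulB B v) in *; set (be0 := mulB B w) in *.
  destruct (two_forms_pos_near (form_comb be0 (coordR v w) (- al0) (coordL v w))
                                (form_comb be0 (coordR v w) al0 (coordL v w)) w)
    as [eta [Heta Hnear]];
    try (rewrite mulB_form_comb, coordL_right, (coordR_right v w D); lra).
  exists eta; split; [exact Heta|]; intros z Hz; apply NT_guard; intro k.
  destruct (Hnear z Hz) as [Hm Hp]; rewrite !mulB_form_comb in Hm, Hp.
  rewrite guard_seq_rowpow, (form_coords _ v w z D), <- !guard_seq_rowpow.
  apply dominated_combination_pos with al0 be0; auto; lra.
Qed.

Lemma ray_self (v : vec2) : ray v v.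
Proof. exists 1; split; [lra|]; destruct v; unfold scal; simpl; f_equal; ring. Qed.

Lemma ray_in_kernel (B : mat12) (v : vec2) :
  mulB B v = 0 -> forall x, ray v x -> mulB B x = 0.
Proof.
  intros Hv x [c [_ ->]]; unfold mulB, scal in *; simpl.
  replace (b1 B * (c * fst v) + b2 B * (c * snd v)) with (c * (b1 B * fst v + b2 B * snd v))
    by ring.
  rewrite Hv; ring.
Qed.

(* Over a basis of boundary points the guard values never vanish together,
   since no B A^k is the zero form while NT is not empty. *)
Lemma guard_sum_pos (A : mat22) (B : mat12) (v w : vec2) :
  boundary (NT A B) v -> det2 v w <> 0 ->
  (forall k, 0 <= guard_seq A B v k) -> (forall k, 0 <= guard_seq A B w k) ->
  forall k, 0 < guard_seq A B v k + guard_seq A B w k.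
Proof.
  intros Hbd D Hv Hw k.
  destruct (Rlt_or_le 0 (guard_seq A B v k + guard_seq A B w k)) as [G|G]; [exact G|exfalso].
  destruct (proj1 (Hbd 1 Rlt_0_1)) as [y [Hy _]].
  pose proof (proj1 (NT_guard A B y) Hy k) as Hyk; specialize (Hv k); specialize (Hw k).
  rewrite guard_seq_rowpow in Hyk, Hv, Hw; rewrite !guard_seq_rowpow in G.
  rewrite (form_zero_on_basis (rowpow A B k) v w y D) in Hyk; lra.
Qed.

Lemma transversal_boundary_pair_impossible (A : mat22) (B : mat12) (v w : vec2) :
  boundary (NT A B) v -> boundary (NT A B) w ->
  mulB B v <> 0 -> mulB B w <> 0 -> (forall c, c > 0 -> w <> scal c v) -> False.
Proof.
  intros Hbv Hbw Bv Bw Hnot.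
  pose proof (boundary_guard_nonneg A B v Hbv) as Hv.
  pose proof (boundary_guard_nonneg A B w Hbw) as Hw.
  assert (Hv0 : 0 < mulB B v) by (specialize (Hv 0%nat); rewrite guard_seq_0 in Hv; lra).
  assert (Hw0 : 0 < mulB B w) by (specialize (Hw 0%nat); rewrite guard_seq_0 in Hw; lra).
  assert (D : det2 v w <> 0).
  { intro D; apply (Hnot (mulB B w / mulB B v)); [apply Rdiv_lt_0_compat; lra|].
    exact (collinear_multiple B v w D Bv). }
  assert (D' : det2 w v <> 0) by (rewrite det2_swap; lra).
  pose proof (guard_sum_pos A B v w Hbv D Hv Hw) as Hsum.
  assert (Hsum' : forall k, 0 < guard_seq A B w k + guard_seq A B v k)
    by (intro k; rewrite Rplus_comm; apply Hsum).
  destruct (comparison_constant_sign (trA A) (detA A) (guard_seq A B v) (guard_seq A B w)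
              (guard_seq_cayley_hamilton A B v) (guard_seq_cayley_hamilton A B w) Hv Hw Hsum)
    as [Hcmp|Hcmp].
  - destruct (dominant_point_interior A B v w D Hv Hw Hsum Hw0) as [eta [Heta Hint]].
    { intro k; specialize (Hcmp k); simpl in Hcmp; rewrite !guard_seq_0 in Hcmp; lra. }
    exact (boundary_not_interior _ w eta Hbw Heta Hint).
  - destruct (dominant_point_interior A B w v D' Hw Hv Hsum' Hv0) as [eta [Heta Hint]].
    { intro k; specialize (Hcmp k); simpl in Hcmp; rewrite !guard_seq_0 in Hcmp; lra. }
    exact (boundary_not_interior _ v eta Hbv Heta Hint).
Qed.

Theorem lemma3 (A : mat22) (B : mat12) (v1 v2 : vec2) :
  v1 <> (0, 0) -> v2 <> (0, 0) ->
  (forall t : R, t > 0 -> v2 <> scal t v1) ->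
  (forall x : vec2, boundary (NT A B) x <-> (ray v1 x \/ ray v2 x)) ->
  (forall x, ray v1 x -> mulB B x = 0) \/ (forall x, ray v2 x -> mulB B x = 0).
Proof.
  intros _ _ Hnot Hbd.
  destruct (Req_dec (mulB B v1) 0) as [E1|E1]; [left; exact (ray_in_kernel B v1 E1)|].
  destruct (Req_dec (mulB B v2) 0) as [E2|E2]; [right; exact (ray_in_kernel B v2 E2)|].
  exfalso; apply (transversal_boundary_pair_impossible A B v1 v2); auto;
    apply Hbd; [left | right]; apply ray_self.
Qed.
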